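(* Let $G$ be a group and $\mathcal{L}$ a first-order language. Let $\mathfrak{C}$ be one of the following four categories: $\mathfrak{M}_G$ (G-structures with $G$-equivariant morphisms), $\mathfrak{M}_G^{\leq}$ (G-structures with $G$-equivariant embeddings), $\mathfrak{M}_G^{\prec}$ (G-structures with $G$-equivariant elementary embeddings), $\mathfrak{M}_G^{\geq}$ (G-structures with $G$-equivariant submersions). Then $\mathfrak{C}$ is closed under colimits of directed systems: for every directed system $\{\mathcal{M}_i, \rho_{ki}\}_{i,k\in\mathcal{D}}$ of G-structures whose transition maps $\rho_{ki}$ are arrows of $\mathfrak{C}$, the colimit structure $\mathcal{M}=\operatorname{coLim}_{i\in\mathcal{D}}\mathcal{M}_i$ carries a well-defined action of $G$ given by $g[x]=[gx]$ (for $x\in M_i$), with which $\mathcal{M}$ is a G-structure and each canonical quotient map $q_i:\mathcal{M}_i\to\mathcal{M}$, $x\mapsto[x]$, is a $G$-equivariant morphism.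
   Context: A language is $\mathcal{L}=(\mathcal{F},\mathcal{R},\mathcal{C})$ with function, relation and constant symbols, each function/relation symbol having a positive arity. An $\mathcal{L}$-structure $\mathcal{M}$ has a nonempty universe $M$ and interpretations $f^{\mathcal{M}}:M^{n_f}\to M$, $R^{\mathcal{M}}\subset M^{n_R}$, $c^{\mathcal{M}}\in M$. A morphism $\alpha:\mathcal{M}\to\mathcal{N}$ is a map $M\to N$ with $\alpha(f^{\mathcal{M}}(\mathbf a))=f^{\mathcal{N}}(\alpha(\mathbf a))$, $\alpha(R^{\mathcal{M}})\subset R^{\mathcal{N}}$, $\alpha(c^{\mathcal{M}})=c^{\mathcal{N}}$. It is saturated if $\alpha^{-1}(R^{\mathcal{N}})\subset R^{\mathcal{M}}$ for all $R$; an embedding (resp. submersion) is an injective (resp. surjective) saturated morphism; an elementary embedding is an embedding with $\mathcal{M}\models\varphi(\mathbf a)\iff\mathcal{N}\models\varphi(\alpha(\mathbf a))$ for all formulas $\varphi$ and tuples $\mathbf a$. Given a group $G$, a G-structure is an $\mathcal{L}$-structure $\mathcal{M}$ together with an action of $G$ on $M$ such that: the set $\{c^{\mathcal{M}}:c\in\mathcal{C}\}$ is $G$-invariant; for each $R\in\mathcal{R}$, if $(x_1,\dots,x_{n})\in R^{\mathcal{M}}$ and $g_1,\dots,g_n\in G$ then $(g_1x_1,\dots,g_nx_n)\in R^{\mathcal{M}}$; and for each $f\in\mathcal{F}$ of arity $n$, $f^{\mathcal{M}}(gx_1,\dots,gx_n)=g f^{\mathcal{M}}(x_1,\dots,x_n)$.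 Directed system and colimit: $(\mathcal{D},\leq)$ is a poset such that any $i,j$ have some $k\leq i,j$; for $k\leq i$ there are morphisms $\rho_{ki}:\mathcal{M}_i\to\mathcal{M}_k$ with $\rho_{ii}=\mathrm{id}$ and $\rho_{lk}\rho_{ki}=\rho_{li}$. The colimit $\mathcal{M}$ has universe $\bigsqcup_i M_i/\sim$, where for $x\in M_i,y\in M_j$, $x\sim y$ iff there is $k\leq i,j$ with $\rho_{ki}(x)=\rho_{kj}(y)$; $[x]$ denotes the class (germ) of $x$, and germs of tuples are defined likewise. Interpretations: $f^{\mathcal{M}}([\mathbf x])=[f^{\mathcal{M}_i}(\mathbf x)]$ for $\mathbf x\in M_i^{n_f}$; $R^{\mathcal{M}}=\{[\mathbf x]:\mathbf x\in R^{\mathcal{M}_i}\text{ for some } i\}$; $c^{\mathcal{M}}=[c^{\mathcal{M}_i}]$ for any $i$. *)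

From mathcomp Require Import all_boot.
From Stdlib Require Import ClassicalEpsilon.

Set Implicit Arguments.
Unset Strict Implicit.
Unset Printing Implicit Defensive.

Record language := Language {
  Fsym : Type;
  Rsym : Type;
  Csym : Type;
  farity : Fsym -> nat;
  rarity : Rsym -> nat;
  farity_pos : forall f, 0 < farity f;
  rarity_pos : forall r, 0 < rarity r
}.

Record structure (L : language) := Structure {
  univ : Type;
  univ_ne : inhabited univ;
  finterp : forall f : Fsym L, ('I_(farity f) -> univ) -> univ;
  rinterp : forall r : Rsym L, ('I_(rarity r) -> univ) -> Prop;
  cinterp : Csym L -> univ
}.

Arguments finterp {L} s f xs.
Arguments rinterp {L} s r xs.
Arguments cinterp {L} s c.

Section Morphisms.
Variable L : language.
Implicit Types M N : structure L.

Definition is_morphism M N (a : univ M -> univ N) : Prop :=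
  (forall f xs, a (finterp M f xs) = finterp N f (fun j => a (xs j))) /\
  (forall r xs, rinterp M r xs -> rinterp N r (fun j => a (xs j))) /\
  (forall c, a (cinterp M c) = cinterp N c).

Definition is_saturated M N (a : univ M -> univ N) : Prop :=
  forall r xs, rinterp N r (fun j => a (xs j)) -> rinterp M r xs.

Definition is_embedding M N (a : univ M -> univ N) : Prop :=
  [/\ is_morphism a, is_saturated a & forall x y, a x = a y -> x = y].

Definition is_submersion M N (a : univ M -> univ N) : Prop :=
  [/\ is_morphism a, is_saturated a & forall y, exists x, a x = y].

Inductive term : Type :=
  | TVar : nat -> term
  | TCst : Csym L -> term
  | TApp : forall f : Fsym L, ('I_(farity f) -> term) -> term.

Inductive formula : Type :=
  | FFalse : formula
  | FEq : term -> term -> formula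
  | FRel : forall r : Rsym L, ('I_(rarity r) -> term) -> formula
  | FNeg : formula -> formula
  | FAnd : formula -> formula -> formula
  | FEx : nat -> formula -> formula.

Fixpoint teval M (v : nat -> univ M) (t : term) : univ M :=
  match t with
  | TVar n => v n
  | TCst c => cinterp M c
  | TApp f ts => finterp M f (fun j => teval v (ts j))
  end.

Definition upd M (v : nat -> univ M) (n : nat) (a : univ M) : nat -> univ M :=
  fun m => if m == n then a else v m.

Fixpoint sat M (v : nat -> univ M) (phi : formula) : Prop :=
  match phi with
  | FFalse => False
  | FEq t1 t2 => teval v t1 = teval v t2
  | FRel r ts => rinterp M r (fun j => teval v (ts j))
  | FNeg p => ~ sat v p
  | FAnd p q => sat v p /\ sat v q
  | FEx n p => exists a, sat (upd v n a) p
  end.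

Definition is_elementary_embedding M N (a : univ M -> univ N) : Prop :=
  is_embedding a /\
  forall (phi : formula) (v : nat -> univ M), sat v phi <-> sat (fun n => a (v n)) phi.

End Morphisms.

Record group := Group {
  gcar : Type;
  gmul : gcar -> gcar -> gcar;
  gone : gcar;
  ginv : gcar -> gcar;
  gmulA : forall x y z, gmul x (gmul y z) = gmul (gmul x y) z;
  gmul1 : forall x, gmul gone x = x;
  gmulV : forall x, gmul (ginv x) x = gone
}.

Definition is_action (G : group) (X : Type) (act : gcar G -> X -> X) : Prop :=
  (forall x, act (@gone G) x = x) /\
  (forall g h x, act (@gmul G g h) x = act g (act h x)).

Definition is_Gstructure (G : group) (L : language) (M : structure L)
    (act : gcar G -> univ M -> univ M) : Prop :=
  [/\ is_action act,
      (forall g c, exists c', act g (cinterp M c) = cinterp M c'),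
      (forall r xs (gs : 'I_(rarity r) -> gcar G),
          rinterp M r xs -> rinterp M r (fun j => act (gs j) (xs j)))
    & (forall f g xs, finterp M f (fun j => act g (xs j)) = act g (finterp M f xs))].

Definition is_equivariant (G : group) (X Y : Type)
    (actX : gcar G -> X -> X) (actY : gcar G -> Y -> Y) (a : X -> Y) : Prop :=
  forall g x, a (actX g x) = actY g (a x).

Inductive Gcategory := CatMor | CatEmb | CatElem | CatSub.

Definition is_arrow (C : Gcategory) (G : group) (L : language)
    (M N : structure L) (actM : gcar G -> univ M -> univ M)
    (actN : gcar G -> univ N -> univ N) (a : univ M -> univ N) : Prop :=
  is_equivariant actM actN a /\
  match C with
  | CatMor => is_morphism a
  | CatEmb => is_embedding a
  | CatElem => is_elementary_embedding a
  | CatSub => is_submersion a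
  end.

(* (D, le) directed poset: any i, j have some k <= i, j; for k <= i a map
   rho k i : M_i -> M_k.  rho is given as a total function, only its values
   for k <= i matter. *)
Unset Implicit Arguments.
Record dsystem (L : language) := DSystem {
  dom : Type;
  dle : dom -> dom -> Prop;
  dle_refl : forall i, dle i i;
  dle_antisym : forall i j, dle i j -> dle j i -> i = j;
  dle_trans : forall i j k, dle i j -> dle j k -> dle i k;
  dle_directed : forall i j, exists k, dle k i /\ dle k j;
  dom_ne : inhabited dom;
  dstr : dom -> structure L;
  drho : forall k i, univ (dstr i) -> univ (dstr k);
  drho_id : forall i (x : univ (dstr i)), drho i i x = x;
  drho_comp : forall l k i (x : univ (dstr i)), dle l k -> dle k i ->
      drho l k (drho k i x) = drho l i x
}.

Set Implicit Arguments.
Arguments dom {L} d.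
Arguments dom_ne {L} d.
Arguments dle {L} d _ _.
Arguments dstr {L} d _.
Arguments drho {L} d k i _.

Section Colimit.
Variables (L : language) (S : dsystem L).

Definition germ_pre := {i : dom S & univ (dstr S i)}.

Definition germ_equiv (x y : germ_pre) : Prop :=
  exists k, [/\ dle S k (projT1 x), dle S k (projT1 y) &
    drho S k (projT1 x) (projT2 x) = drho S k (projT1 y) (projT2 y)].

Definition colim_univ : Type :=
  {P : germ_pre -> Prop | exists x, P = germ_equiv x}.

Definition germ (i : dom S) (x : univ (dstr S i)) : colim_univ :=
  exist _ (germ_equiv (existT _ i x)) (ex_intro _ (existT _ i x) erefl).

Lemma colim_ne : inhabited colim_univ.
Proof.
case: (dom_ne S) => i; case: (univ_ne (dstr S i)) => x.
exact: inhabits (germ x).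
Qed.

Definition colim_fun (f : Fsym L) (ys : 'I_(farity f) -> colim_univ) : colim_univ :=
  epsilon colim_ne (fun z => exists i (xs : 'I_(farity f) -> univ (dstr S i)),
     (forall j, germ (xs j) = ys j) /\ z = germ (finterp (dstr S i) f xs)).

Definition colim_rel (r : Rsym L) (ys : 'I_(rarity r) -> colim_univ) : Prop :=
  exists i (xs : 'I_(rarity r) -> univ (dstr S i)),
     (forall j, germ (xs j) = ys j) /\ rinterp (dstr S i) r xs.

Definition colim_cst (c : Csym L) : colim_univ :=
  epsilon colim_ne (fun z => exists i, z = germ (cinterp (dstr S i) c)).

Definition colim : structure L :=
  Structure colim_ne colim_fun colim_rel colim_cst.

End Colimit.

From mathcomp Require Import all_boot.
From Stdlib Require Import ClassicalEpsilon FunctionalExtensionality.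
From Stdlib Require Import PropExtensionality ProofIrrelevance.

(* Every finite family of germs is represented at a single stage of the system,
   since any finitely many indices have a common lower bound.  This makes the
   interpretations of the colimit and the action [g[x] = [gx]] independent of
   the chosen representatives once the transition maps are equivariant
   morphisms; the G-structure axioms of the colimit are then inherited
   stagewise from a single M_i. *)

Lemma arrow_is_morphism {C G L} {M N : structure L} {actM actN} {a : univ M -> univ N} :
  @is_arrow C G L M N actM actN a -> is_morphism a.
Proof. by case: C => -[_] // [] // [] []. Qed.

Lemma arrow_is_equivariant {C G L} {M N : structure L} {actM actN} {a : univ M -> univ N} :
  @is_arrow C G L M N actM actN a -> is_equivariant actM actN a.
Proof. by case. Qed.

Arguments dle_trans {L} _ {i j k}.

Section Germs.
Variables (L : language) (S : dsystem L).

Lemma drho_agree_down {l k i j} {x : univ (dstr S i)} {y : univ (dstr S j)} :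
  dle S l k -> dle S k i -> dle S k j -> drho S k i x = drho S k j y ->
  drho S l i x = drho S l j y.
Proof.
move=> lk ki kj E.
by rewrite -(drho_comp _ _ _ _ _ _ lk ki) E (drho_comp _ _ _ _ _ _ lk kj).
Qed.

Lemma germ_equiv_refl x : germ_equiv (S:=S) x x.
Proof. by exists (projT1 x); split => //; apply: dle_refl. Qed.

Lemma germ_equiv_sym {x y} : germ_equiv (S:=S) x y -> germ_equiv y x.
Proof. by case=> k [? ? E]; exists k; split. Qed.

Lemma germ_equiv_trans {x y z} :
  germ_equiv (S:=S) x y -> germ_equiv y z -> germ_equiv x z.
Proof.
case=> k [kx ky Exy] [k' [k'y k'z Eyz]].
have [m [mk mk']] := dle_directed _ S k k'.
exists m; split; [exact: (dle_trans S mk kx) | exact: (dle_trans S mk' k'z) |].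
rewrite (drho_agree_down mk kx ky Exy).
exact: drho_agree_down mk' k'y k'z Eyz.
Qed.

Lemma germ_eqP i j (x : univ (dstr S i)) (y : univ (dstr S j)) :
  germ x = germ y <-> germ_equiv (existT _ i x) (existT _ j y).
Proof.
split=> [/(f_equal (@proj1_sig _ _)) /= -> | xy]; first exact: germ_equiv_refl.
have E : germ_equiv (existT _ i x) = germ_equiv (existT _ j y).
  apply: functional_extensionality => z; apply: propositional_extensionality.
  split; [exact: germ_equiv_trans (germ_equiv_sym xy) | exact: germ_equiv_trans xy].
rewrite /germ; move: (ex_intro _ _ _) (ex_intro _ _ _); rewrite E => p q.
by rewrite (proof_irrelevance _ p q).
Qed.

Lemma germ_surj (z : colim_univ S) : exists p : germ_pre S, z = germ (projT2 p).
Proof.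
case: z => P [[i x] EP]; exists (existT _ i x); subst P.
by congr exist; apply: proof_irrelevance.
Qed.

Lemma germ_drho k i (x : univ (dstr S i)) : dle S k i -> germ (drho S k i x) = germ x.
Proof.
move=> ki; apply/germ_eqP; exists k; split => //=; first exact: dle_refl.
by rewrite drho_id.
Qed.

Lemma dle_lower_bound {n} (I : 'I_n -> dom S) : exists k, forall j, dle S k (I j).
Proof.
elim: n I => [|n IH] I; first by case: (dom_ne S) => k; exists k => -[].
have [k Hk] := IH (fun j => I (lift ord0 j)).
have [m [mk m0]] := dle_directed _ S k (I ord0).
by exists m => j; case: (unliftP ord0 j) => [j' ->|->] //; exact: (dle_trans S mk (Hk j')).
Qed.

Lemma germ_family {n} (zs : 'I_n -> colim_univ S) :
  exists k (xs : 'I_n -> univ (dstr S k)), forall j, germ (xs j) = zs j.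
Proof.
have [ps Eps] : exists ps : 'I_n -> germ_pre S, forall j, zs j = germ (projT2 (ps j)).
  exact: ClassicalEpsilon.choice _ (fun j => germ_surj (zs j)).
have [k Hk] := dle_lower_bound (fun j => projT1 (ps j)).
by exists k, (fun j => drho S k _ (projT2 (ps j))) => j; rewrite germ_drho // Eps.
Qed.

Lemma germ_family_eqP {n i i'} {xs : 'I_n -> univ (dstr S i)} {ys : 'I_n -> univ (dstr S i')} :
  (forall j, germ (xs j) = germ (ys j)) ->
  exists k, [/\ dle S k i, dle S k i' & forall j, drho S k i (xs j) = drho S k i' (ys j)].
Proof.
move=> Exy.
have agree_at j : exists k,
    [/\ dle S k i, dle S k i' & drho S k i (xs j) = drho S k i' (ys j)].
  by have /germ_eqP [k ?] := Exy j; exists k.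
have [K HK] := ClassicalEpsilon.choice _ agree_at.
have [m0 Hm0] := dle_lower_bound K.
have [m1 [m1m0 m1i]] := dle_directed _ S m0 i.
have [m [mm1 mi']] := dle_directed _ S m1 i'.
have mK j : dle S m (K j) := dle_trans S mm1 (dle_trans S m1m0 (Hm0 j)).
exists m; split; [exact: (dle_trans S mm1 m1i) | by [] |].
by move=> j; case: (HK j) => Ki Ki' E; apply: drho_agree_down (mK j) Ki Ki' E.
Qed.

Section MorphismTransitions.
Hypothesis drho_morphism : forall k i, dle S k i -> is_morphism (drho S k i).

Lemma colim_funE i f (xs : 'I_(farity f) -> univ (dstr S i)) :
  @colim_fun L S f (fun j => germ (xs j)) = germ (finterp (dstr S i) f xs).
Proof.
rewrite /colim_fun; set P := (fun z => _).
have : P (epsilon (colim_ne S) P).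
  by apply: epsilon_spec; exists (germ (finterp (dstr S i) f xs)), i, xs.
case=> i' [xs' [Exs' ->]].
have [k [ki' ki Ek]] := germ_family_eqP Exs'.
apply/germ_eqP; exists k; split => //=.
case: (drho_morphism _ _ ki') => -> _; case: (drho_morphism _ _ ki) => -> _.
by congr finterp; apply: functional_extensionality.
Qed.

Lemma colim_cstE c i : colim_cst S c = germ (cinterp (dstr S i) c).
Proof.
rewrite /colim_cst; set P := (fun z => _).
have : P (epsilon (colim_ne S) P).
  by apply: epsilon_spec; exists (germ (cinterp (dstr S i) c)), i.
case=> j ->; have [k [kj ki]] := dle_directed _ S j i.
apply/germ_eqP; exists k; split => //=.
by case: (drho_morphism _ _ kj) => _ [_ ->]; case: (drho_morphism _ _ ki) => _ [_ ->].
Qed.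

Lemma germ_is_morphism i : is_morphism (M := dstr S i) (N := colim S) (@germ L S i).
Proof.
split; first by move=> f xs; rewrite /= colim_funE.
by split=> [r xs ?|c]; [exists i, xs | rewrite /= (colim_cstE c i)].
Qed.

End MorphismTransitions.

Section Action.
Variables (G : group) (acts : forall i : dom S, gcar G -> univ (dstr S i) -> univ (dstr S i)).

Definition colim_act (g : gcar G) (z : colim_univ S) : colim_univ S :=
  let p := proj1_sig (constructive_indefinite_description _ (germ_surj z)) in
  germ (acts (projT1 p) g (projT2 p)).

Hypothesis drho_equivariant :
  forall k i, dle S k i -> is_equivariant (acts i) (acts k) (drho S k i).

Lemma colim_act_germ g i (x : univ (dstr S i)) : colim_act g (germ x) = germ (acts i g x).
Proof.
rewrite /colim_act; case: (constructive_indefinite_description _ _).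
move=> [j y] /= /germ_eqP [k [kj ki E]].
by apply/germ_eqP; exists k; split => //=; rewrite !drho_equivariant // E.
Qed.

Lemma germ_is_equivariant i : is_equivariant (acts i) colim_act (@germ L S i).
Proof. by move=> g x; rewrite colim_act_germ. Qed.

Hypothesis drho_morphism : forall k i, dle S k i -> is_morphism (drho S k i).
Hypothesis acts_Gstructure : forall i, is_Gstructure (acts i).

Lemma colim_act_is_action : is_action colim_act.
Proof.
split=> [z|g h z]; have [[i x] ->] := germ_surj z; rewrite /= !colim_act_germ;
  by case: (acts_Gstructure i) => -[act1 actM] _ _ _; rewrite ?act1 ?actM.
Qed.

Lemma colim_Gstructure : is_Gstructure (M := colim S) colim_act.
Proof.
split; first exact: colim_act_is_action.
- move=> g c; have [i] := dom_ne S.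
  rewrite /= (colim_cstE drho_morphism c i) colim_act_germ.
  case: (acts_Gstructure i) => _ /(_ g c) [c' ->] _ _.
  by exists c'; rewrite (colim_cstE drho_morphism c' i).
- move=> r zs gs [i [xs [Exs Hr]]].
  exists i, (fun j => acts i (gs j) (xs j)); split.
    by move=> j; rewrite -Exs colim_act_germ.
  by case: (acts_Gstructure i) => _ _ /(_ r xs gs Hr).
- move=> f g zs; have [k [xs Exs]] := germ_family zs.
  have -> : zs = (fun j => germ (xs j)) by apply: functional_extensionality => j.
  rewrite /= (colim_funE drho_morphism) colim_act_germ.
  have -> : (fun j => colim_act g (germ (xs j))) = (fun j => germ (acts k g (xs j))).
    by apply: functional_extensionality => j; exact: colim_act_germ.
  by rewrite (colim_funE drho_morphism); case: (acts_Gstructure k) => _ _ _ ->.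
Qed.

End Action.
End Germs.

Theorem proposition2p6p1 (C : Gcategory) (G : group) (L : language)
  (S : dsystem L)
  (acts : forall i : dom S, gcar G -> univ (dstr S i) -> univ (dstr S i))
  (HG : forall i, is_Gstructure (acts i))
  (Harrow : forall k i, dle S k i ->
     is_arrow C (acts i) (acts k) (drho S k i)) :
  exists actM : gcar G -> univ (colim S) -> univ (colim S),
    [/\ (forall g i (x : univ (dstr S i)), actM g (germ x) = germ (acts i g x)),
        is_Gstructure actM
      & forall i, is_morphism (M := dstr S i) (N := colim S) (@germ L S i) /\
                  is_equivariant (acts i) actM (@germ L S i)].
Proof.
have Hmor k i (ki : dle S k i) := arrow_is_morphism (Harrow k i ki).
have Hequiv k i (ki : dle S k i) := arrow_is_equivariant (Harrow k i ki).
exists (@colim_act L S G acts); split.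
- exact: colim_act_germ _ _ _ _ Hequiv.
- exact: colim_Gstructure _ _ _ _ Hequiv Hmor HG.
- move=> i; split; first exact: germ_is_morphism _ _ Hmor i.
  exact: germ_is_equivariant _ _ _ _ Hequiv i.
Qed.
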